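(* Let $M\in SL_2(\mathbb{Z})$ be hyperbolic and let $\epsilon>0$. Then there exists $c_M>0$ such that for every $\kappa$ with $0\le\kappa<c_M$ there exist constants $c_1>c_2>0$ such that for all $n_1,n_2\in\mathbb{Z}^2$ there exists $y_{n_1,n_2}\in\mathbb{R}^2$ with $\|y_{n_1,n_2}\|<\epsilon$ such that for every map $R:\mathbb{R}^2\to\mathbb{R}_{\ge0}$ satisfying $R(z)\le\kappa\|z\|$ for all $z$ with $\|z\|<\epsilon$, one has $$-c_1\big(|n_1|_M-|n_2|_M\big)-\big(n_2^TM-n_1^T\big)y_{n_1,n_2}+\|n_2\|\,R(y_{n_1,n_2})\le -c_2\big(\|n_1\|+\|n_2\|\big).$$
   Context: For $z=(z_1,z_2)\in\mathbb{R}^2$, $\|z\|=|z_1|+|z_2|$; $n^T$ denotes the transpose (row vector). A matrix $M\in SL_2(\mathbb{Z})$ is hyperbolic if none of its eigenvalues has modulus $1$; let $E^+,E^-$ be the eigenlines of the transpose $M^T$ for the eigenvalues of modulus $\lambda_M>1$ and $\lambda_M^{-1}$. Every $y\in\mathbb{R}^2$ decomposes uniquely as $y=y^+_M+y^-_M$ with $y^\pm_M\in E^\pm$, and $|y|_M:=\|y^+_M\|-\|y^-_M\|$. *)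

From HB Require Import structures.
From mathcomp Require Import all_boot all_order all_algebra.
From mathcomp Require Import algC.
From mathcomp Require Import reals.
From Stdlib Require ClassicalEpsilon.
Set Implicit Arguments. Unset Strict Implicit. Unset Printing Implicit Defensive.
Import Order.TTheory GRing.Theory Num.Theory.
Local Open Scope ring_scope.

Definition l1 {R : realType} (z : 'cV[R]_2) : R := \sum_(i < 2) `|z i 0|.

Definition toR {R : realType} {m n : nat} (A : 'M[int]_(m, n)) : 'M[R]_(m, n) :=
  map_mx (fun x : int => x%:~R) A.

Definition hyperbolic (M : 'M[int]_2) : Prop :=
  forall z : algC, eigenvalue (map_mx (fun x : int => x%:~R) M) z -> `|z| != 1.

Definition is_eigval {R : realType} (A : 'M[R]_2) (mu : R) : Prop :=
  exists v : 'cV[R]_2, v != 0 /\ A *m v = mu *: v.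

Definition Mdecomp {R : realType} (M : 'M[int]_2) (y yp ym : 'cV[R]_2) : Prop :=
  let Mt := (toR M)^T in
  exists mu nu : R,
    [/\ is_eigval Mt mu, is_eigval Mt nu, 1 < `|mu| & `|nu| = `|mu|^-1] /\
    [/\ Mt *m yp = mu *: yp, Mt *m ym = nu *: ym & y = yp + ym].

(* the (unique) decomposition, chosen *)
Definition Msplit {R : realType} (M : 'M[int]_2) (y : 'cV[R]_2) : 'cV[R]_2 * 'cV[R]_2 :=
  ClassicalEpsilon.epsilon (inhabits (0, 0))
    (fun p : 'cV[R]_2 * 'cV[R]_2 => Mdecomp M y p.1 p.2).

Definition normM {R : realType} (M : 'M[int]_2) (y : 'cV[R]_2) : R :=
  l1 (Msplit M y).1 - l1 (Msplit M y).2.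

(* Since det M = 1 and M is hyperbolic, |tr M| > 2, so M^T has real eigenvalues
   mu and nu = 1/mu with |mu| > 1, and A = M^T satisfies A^2 = (mu + nu) A - 1.
   The splitting y = y^+ + y^- is then given by the spectral projections
   (A - nu)/(mu - nu) and (A - mu)/(nu - mu); hence |.|_M is Lipschitz for the
   l1 norm and strictly expanded by A: |A x|_M >= |x|_M + (1 - |nu|) ||x||,
   because |mu| + |nu| >= 2.  With w = M^T n2 - n1, the choice y = r sign(w)
   turns the linear term into -r ||w||; for c1 = r/(2C), C the Lipschitz
   constant, the loss c1 C ||w|| is absorbed, leaving a negative multiple of
   ||n2|| + ||w||, which dominates ||n1|| + ||n2||. *)

From mathcomp Require Import all_boot all_order all_algebra algC reals.
From mathcomp Require Import ring lra.
From Stdlib Require Import ClassicalEpsilon.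
Import Order.TTheory GRing.Theory Num.Theory.
Local Open Scope ring_scope.
Set Implicit Arguments. Unset Strict Implicit. Unset Printing Implicit Defensive.

Lemma big_ord2 (V : nmodType) (F : 'I_2 -> V) : \sum_(i < 2) F i = F 0 + F 1.
Proof. by rewrite big_ord_recl big_ord1; congr (F _ + F _); apply/val_inj. Qed.

Lemma char_poly2 (R : comNzRingType) (A : 'M[R]_2) :
  char_poly A = 'X^2 - \tr A *: 'X + (\det A)%:P.
Proof.
have size_cA : size (char_poly A) = 3 by rewrite size_char_poly.
apply/polyP => -[|[|[|i]]]; rewrite !(coefD, coefN, coefZ, coefXn, coefX, coefC) /=.
- by rewrite char_poly_det sqrrN expr1n mul1r; ring.
- by rewrite (char_poly_trace (n := 2)) //; ring.
- have /monicP := char_poly_monic A; rewrite /lead_coef size_cA => ->; ring.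
- by rewrite nth_default ?size_cA //; ring.
Qed.

Lemma horner_char_poly2 (R : comNzRingType) (A : 'M[R]_2) (x : R) :
  (char_poly A).[x] = x ^+ 2 - \tr A * x + \det A.
Proof. by rewrite char_poly2 !hornerE. Qed.

Lemma Cayley_Hamilton2 (R : comNzRingType) (A : 'M[R]_2) :
  A *m A = \tr A *: A - (\det A)%:M.
Proof.
apply/eqP; rewrite -subr_eq0 opprB addrA mulmxE -expr2.
have := Cayley_Hamilton A; rewrite char_poly2 rmorphD rmorphB /=.
by rewrite rmorphXn /= horner_mxZ horner_mx_X horner_mx_C addrAC => ->.
Qed.

Lemma mxtrace_map (R S : nmodType) n (f : {additive R -> S}) (A : 'M[R]_n) :
  \tr (map_mx f A) = f (\tr A).
Proof. by rewrite raddf_sum; apply: eq_bigr => i _; rewrite mxE. Qed.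

Lemma unimodular_quadratic_root (C : numClosedFieldType) (t : C) :
  t \is Num.real -> t ^+ 2 <= 4 -> exists2 z : C, z ^+ 2 - t * z + 1 = 0 & `|z| = 1.
Proof.
move=> t_real t2_le4; set r := sqrtC (4 - t ^+ 2).
have r2 : r ^+ 2 = 4 - t ^+ 2 by rewrite sqrtCK.
have r_real : r \is Num.real by rewrite sqrtC_real // subr_ge0.
have ir2 : ('i * r) ^+ 2 = t ^+ 2 - 4 by rewrite exprMn sqrCi r2; ring.
exists ((t + 'i * r) / 2).
  transitivity ((('i * r) ^+ 2 - (t ^+ 2 - 4)) / 4); first by field.
  by rewrite ir2 subrr mul0r.
have norm_2z : `|t + 'i * r| = 2.
  apply/eqP; rewrite -(eqrXn2 (n := 2)) ?normr_ge0 ?ler0n // normC2_rect // r2.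
  by apply/eqP; ring.
by rewrite normrM norm_2z normfV ger0_norm ?ler0n // mulfV ?pnatr_eq0.
Qed.

Lemma quadratic_real_roots (R : rcfType) (t : R) : 2 < `|t| ->
  exists mu nu : R, [/\ mu + nu = t, mu * nu = 1 & 1 < `|mu|].
Proof.
move=> t_gt2; wlog t_ge0 : t t_gt2 / 0 <= t.
  move=> roots_ge0; have [t_ge0|t_lt0] := lerP 0 t; first exact: roots_ge0.
  have [||mu [nu [mu_nu_sum mu_nu mu_gt1]]] := roots_ge0 (- t); rewrite ?normrN ?oppr_ge0 ?ltW //.
  by exists (- mu), (- nu); rewrite -opprD mu_nu_sum opprK mulrNN normrN.
rewrite ger0_norm // in t_gt2.
set r := Num.sqrt (t ^+ 2 - 4).
have r2 : r ^+ 2 = t ^+ 2 - 4 by rewrite sqr_sqrtr // subr_ge0; nra.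
have r_ge0 : 0 <= r by apply: sqrtr_ge0.
exists ((t + r) / 2), ((t - r) / 2); split; first by field.
  by transitivity ((t ^+ 2 - r ^+ 2) / 4); [field | rewrite r2; field].
by rewrite ger0_norm; lra.
Qed.

Lemma hyperbolic_trace (M : 'M[int]_2) : \det M = 1 -> hyperbolic M -> 2 < `|\tr M|.
Proof.
move=> detM hypM; rewrite ltNge; apply/negP => tr_le2.
set t : algC := (\tr M)%:~R.
have t2_le4 : t ^+ 2 <= 4.
  rewrite -rmorphXn /= -[4]/(4%:~R) ler_int -real_normK ?num_real //.
  by rewrite (_ : 4 = 2 ^+ 2) // (ler_pXn2r (n := 2)) ?nnegrE ?normr_ge0.
have [z z_root z_norm] := unimodular_quadratic_root (realz _ _) t2_le4.
suff /hypM : eigenvalue (map_mx (fun x : int => x%:~R) M) z by rewrite z_norm eqxx.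
rewrite eigenvalue_root_char /root horner_char_poly2 det_map_mx mxtrace_map /= detM.
by rewrite z_root.
Qed.

Section EigenProjection.

Variables (F : fieldType) (n : nat).
Implicit Types (A : 'M[F]_n) (mu nu : F) (v : 'cV[F]_n).

(* If (A - mu) (A - nu) = 0 and mu != nu, this is the projection onto the
   mu-eigenspace along the nu-eigenspace. *)
Definition eproj A mu nu : 'M[F]_n := (mu - nu)^-1 *: (A - nu%:M).

Lemma eprojD A mu nu : mu != nu -> eproj A mu nu + eproj A nu mu = 1%:M.
Proof.
move=> mu_nu; rewrite /eproj -[nu - mu]opprB invrN scaleNr -scalerBr.
have -> : A - nu%:M - (A - mu%:M) = (mu - nu)%:M.
  by rewrite opprB addrC addrA subrK raddfB.
by rewrite scale_scalar_mx mulVf // subr_eq0.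
Qed.

Lemma mulmx_eproj_comm A mu nu : A *m eproj A mu nu = eproj A mu nu *m A.
Proof.
by rewrite /eproj -scalemxAl -scalemxAr mulmxBl mulmxBr mul_mx_scalar mul_scalar_mx.
Qed.

Lemma eproj_eigen A mu nu : A *m A = (mu + nu) *: A - (mu * nu)%:M ->
  A *m eproj A mu nu = mu *: eproj A mu nu.
Proof.
move=> A_quad; rewrite /eproj -scalemxAr scalerA mulrC -scalerA; congr (_ *: _).
rewrite mulmxBr A_quad mul_mx_scalar scalerDl scalerBr scale_scalar_mx.
by rewrite addrAC addrK.
Qed.

Lemma eproj_eigenvector A mu nu v : mu != nu -> A *m v = mu *: v ->
  eproj A mu nu *m v = v.
Proof.
move=> mu_nu Av; rewrite /eproj -scalemxAl mulmxBl Av mul_scalar_mx -scalerBl.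
by rewrite scalerA mulVf ?scale1r // subr_eq0.
Qed.

Lemma eproj_eigenvector0 A mu nu v : A *m v = nu *: v -> eproj A mu nu *m v = 0.
Proof. by move=> Av; rewrite /eproj -scalemxAl mulmxBl Av mul_scalar_mx subrr scaler0. Qed.

End EigenProjection.

Section L1Norm.

Variable R : realType.
Implicit Types (x y z w : 'cV[R]_2) (B : 'M[R]_2).

Lemma l1E z : l1 z = `|z 0 0| + `|z 1 0|.
Proof. exact: big_ord2. Qed.

Lemma l1_ge0 z : 0 <= l1 z.
Proof. by rewrite l1E addr_ge0. Qed.

Lemma l1D x y : l1 (x + y) <= l1 x + l1 y.
Proof. by rewrite !l1E !mxE addrACA lerD // ler_normD. Qed.

Lemma l1Z (k : R) x : l1 (k *: x) = `|k| * l1 x.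
Proof. by rewrite !l1E !mxE !normrM mulrDr. Qed.

Lemma l1N x : l1 (- x) = l1 x.
Proof. by rewrite -scaleN1r l1Z normrN normr1 mul1r. Qed.

Lemma l1B x y : l1 (x - y) <= l1 x + l1 y.
Proof. by rewrite -(l1N y) l1D. Qed.

Lemma l1_mulmx_bounded B : exists2 S, 0 <= S & forall v, l1 (B *m v) <= S * l1 v.
Proof.
exists (`|B 0 0| + `|B 0 1| + `|B 1 0| + `|B 1 1|) => [|v]; first by rewrite !addr_ge0.
rewrite !l1E !mxE !big_ord2.
have := ler_normD (B 0 0 * v 0 0) (B 0 1 * v 1 0).
have := ler_normD (B 1 0 * v 0 0) (B 1 1 * v 1 0).
rewrite !normrM.
have := normr_ge0 (B 0 0); have := normr_ge0 (B 0 1).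
have := normr_ge0 (B 1 0); have := normr_ge0 (B 1 1).
have := normr_ge0 (v 0 0); have := normr_ge0 (v 1 0).
nra.
Qed.

Lemma l1_map_sg w : l1 (map_mx Num.sg w) <= 2.
Proof. by rewrite l1E !mxE !normr_sg; apply: lerD; case: (_ != 0). Qed.

Lemma trmx_mul_map_sg w : (w^T *m map_mx Num.sg w) 0 0 = l1 w.
Proof. by rewrite mxE big_ord2 !mxE l1E !normrEsg !(mulrC (w _ _)). Qed.

End L1Norm.

Lemma is_eigval_trmx (R : realType) (B : 'M[R]_2) (m : R) :
  root (char_poly B) m -> is_eigval B^T m.
Proof.
rewrite -eigenvalue_root_char => /eigenvalueP [v vB v_neq0].
by exists v^T; rewrite trmx_eq0 -trmx_mul vB linearZ.
Qed.

Section HyperbolicSplitting.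

Variables (R : realType) (M : 'M[int]_2) (mu nu : R).
Hypotheses (detM : \det M = 1) (trM : mu + nu = \tr (toR M))
  (mu_nu : mu * nu = 1) (mu_gt1 : 1 < `|mu|).

Local Notation A := (toR M)^T.
Local Notation P := (eproj A mu nu).
Local Notation Q := (eproj A nu mu).

Lemma nu_lt1 : `|nu| < 1.
Proof.
have : `|mu| * `|nu| = 1 by rewrite -normrM mu_nu normr1.
have := normr_ge0 nu; have := mu_gt1; nra.
Qed.

Lemma mu_neq_nu : mu != nu.
Proof. by apply: contraTneq mu_gt1 => ->; rewrite -leNgt ltW ?nu_lt1. Qed.

Lemma det_toR : \det (toR M) = 1 :> R.
Proof. by rewrite det_map_mx detM. Qed.

Lemma trmx_toR_quadratic : A *m A = (mu + nu) *: A - (mu * nu)%:M.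
Proof. by rewrite Cayley_Hamilton2 mxtrace_tr det_tr trM mu_nu det_toR. Qed.

Lemma trmx_toR_quadraticC : A *m A = (nu + mu) *: A - (nu * mu)%:M.
Proof. by rewrite [nu + mu]addrC [nu * mu]mulrC trmx_toR_quadratic. Qed.

Lemma is_eigval_toRP (m : R) : is_eigval A m <-> m = mu \/ m = nu.
Proof.
split=> [[v [v_neq0 Av]] | m_root].
  have : (A *m A) *m v = (m * m) *: v by rewrite -mulmxA Av -scalemxAr Av scalerA.
  rewrite trmx_toR_quadratic mulmxBl -scalemxAl mul_scalar_mx Av scalerA => /eqP.
  rewrite -subr_eq0 -!scalerBl scaler_eq0 (negPf v_neq0) orbF.
  have -> : (mu + nu) * m - mu * nu - m * m = - ((m - mu) * (m - nu)) by ring.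
  by rewrite oppr_eq0 mulf_eq0 !subr_eq0 => /orP [/eqP|/eqP]; [left|right].
apply: is_eigval_trmx; rewrite /root horner_char_poly2 det_toR -trM -mu_nu.
by case: m_root => ->; apply/eqP; ring.
Qed.

Lemma nu_norm : `|nu| = `|mu|^-1.
Proof.
have mu_neq0 : mu != 0 by rewrite -normr_gt0 (lt_trans ltr01 mu_gt1).
by rewrite -normfV -[nu](mulKf mu_neq0) mu_nu mulr1.
Qed.

Lemma Mdecomp_eproj (y yp ym : 'cV[R]_2) :
  Mdecomp M y yp ym <-> yp = P *m y /\ ym = Q *m y.
Proof.
have nu_neq_mu : nu != mu by rewrite eq_sym mu_neq_nu.
rewrite /Mdecomp /=; split.
  move=> [mu' [nu' [[/is_eigval_toRP mu'_root /is_eigval_toRP nu'_root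
    mu'_gt1 nu'_norm] [Ayp Aym ->]]]].
  have mu'E : mu' = mu.
    by case: mu'_root => // mu'E; move: mu'_gt1; rewrite mu'E ltNge ltW ?nu_lt1.
  have nu'E : nu' = nu.
    case: nu'_root => // nu'E; move: nu'_norm; rewrite mu'E nu'E -nu_norm => mu_nu_norm.
    by have := nu_lt1; rewrite -mu_nu_norm ltNge ltW.
  subst mu' nu'; rewrite !mulmxDr (eproj_eigenvector mu_neq_nu Ayp).
  by rewrite (eproj_eigenvector nu_neq_mu Aym) !eproj_eigenvector0 ?addr0 ?add0r.
move=> [-> ->]; exists mu, nu; split; split.
- by apply/is_eigval_toRP; left.
- by apply/is_eigval_toRP; right.
- exact: mu_gt1.
- exact: nu_norm.
- by rewrite mulmxA eproj_eigen ?scalemxAl // trmx_toR_quadratic.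
- by rewrite mulmxA eproj_eigen ?scalemxAl // trmx_toR_quadraticC.
- by rewrite -mulmxDl eprojD ?mu_neq_nu // mul1mx.
Qed.

Lemma Msplit_eproj (y : 'cV[R]_2) : Msplit M y = (P *m y, Q *m y).
Proof.
have : exists p : 'cV[R]_2 * 'cV[R]_2, Mdecomp M y p.1 p.2.
  by exists (P *m y, Q *m y); apply/Mdecomp_eproj.
move=> /(epsilon_spec (inhabits (0, 0))) /Mdecomp_eproj [split1 split2].
by rewrite [Msplit M y]surjective_pairing split1 split2.
Qed.

Lemma normM_eproj (y : 'cV[R]_2) : normM M y = l1 (P *m y) - l1 (Q *m y).
Proof. by rewrite /normM Msplit_eproj. Qed.

Lemma normM_lipschitz :
  exists2 C : R, 0 < C & forall u w : 'cV[R]_2, normM M u - C * l1 w <= normM M (u - w).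
Proof.
have [SP SP_ge0 P_bound] := l1_mulmx_bounded P.
have [SQ SQ_ge0 Q_bound] := l1_mulmx_bounded Q.
exists (SP + SQ + 1) => [|u w]; first by rewrite ltr_wpDl ?addr_ge0.
rewrite !normM_eproj !mulmxBr.
have := l1D (P *m u - P *m w) (P *m w); rewrite subrK.
have := l1B (Q *m u) (Q *m w); have := P_bound w; have := Q_bound w; have := l1_ge0 w.
lra.
Qed.

Lemma normM_expand (x : 'cV[R]_2) : normM M x + (1 - `|nu|) * l1 x <= normM M (A *m x).
Proof.
rewrite !normM_eproj !mulmxA -!mulmx_eproj_comm.
rewrite eproj_eigen ?trmx_toR_quadratic // eproj_eigen ?trmx_toR_quadraticC //.
rewrite -[(mu *: P) *m x]scalemxAl -[(nu *: Q) *m x]scalemxAl !l1Z.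
have := l1D (P *m x) (Q *m x); rewrite -mulmxDl eprojD ?mu_neq_nu // mul1mx => x_le.
have norm_sum_ge2 : 2 <= `|mu| + `|nu|.
  have : `|mu| * `|nu| = 1 by rewrite -normrM mu_nu normr1.
  have := sqr_ge0 (`|mu| - `|nu|); have := normr_ge0 mu; have := normr_ge0 nu; nra.
have : 0 <= (`|mu| + `|nu| - 2) * l1 (P *m x) by rewrite mulr_ge0 ?l1_ge0 ?subr_ge0.
have : (1 - `|nu|) * l1 x <= (1 - `|nu|) * (l1 (P *m x) + l1 (Q *m x)).
  by rewrite ler_wpM2l // subr_ge0 ltW // nu_lt1.
lra.
Qed.

End HyperbolicSplitting.

Section ExpandingEstimate.

Variables (R : realType) (N : 'cV[R]_2 -> R) (A : 'M[R]_2) (C alpha : R).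
Hypotheses (C_gt0 : 0 < C)
  (N_lipschitz : forall u w, N u - C * l1 w <= N (u - w))
  (N_expand : forall x, N x + alpha * l1 x <= N (A *m x)).

Lemma N_growth (x1 x2 : 'cV[R]_2) :
  N x2 + alpha * l1 x2 - C * l1 (A *m x2 - x1) <= N x1.
Proof.
have := N_lipschitz (A *m x2) (A *m x2 - x1); rewrite subKr.
by have := N_expand x2; lra.
Qed.

Lemma expanding_estimate (eps kappa : R) :
  0 < eps -> 0 <= kappa -> kappa < alpha / (4 * C) ->
  exists c1 c2 : R, [/\ 0 < c2, c2 < c1 &
    forall x1 x2 : 'cV[R]_2, exists y : 'cV[R]_2, l1 y < eps /\
      forall Rf : 'cV[R]_2 -> R, (forall z, l1 z < eps -> Rf z <= kappa * l1 z) ->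
        - c1 * (N x1 - N x2) - ((A *m x2 - x1)^T *m y) 0 0 + l1 x2 * Rf y
        <= - c2 * (l1 x1 + l1 x2)].
Proof.
move=> eps_gt0 kappa_ge0 kappa_lt.
have [S S_ge0 A_bound] := l1_mulmx_bounded A.
set r := eps / 4; set c1 := r / (2 * C); set gamma := c1 * alpha - 2 * kappa * r.
have r_gt0 : 0 < r by rewrite divr_gt0.
have c1_gt0 : 0 < c1 by apply: divr_gt0 => //; apply: mulr_gt0.
have c1C : c1 * C = r / 2 by rewrite /c1; field; rewrite gt_eqF.
have gamma_gt0 : 0 < gamma.
  have : 2 * r * kappa < 2 * r * (alpha / (4 * C)) by rewrite ltr_pM2l // mulr_gt0.
  have -> : 2 * r * (alpha / (4 * C)) = c1 * alpha by rewrite /c1; field; rewrite gt_eqF.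
  by rewrite /gamma; lra.
have [c2 [c2_gt0 c2_gamma c2_r c2_c1]] :
    exists c2, [/\ 0 < c2, c2 * (S + 1) <= gamma, c2 <= r / 2 & c2 < c1].
  set m := Num.min (gamma / (S + 1)) (Num.min (r / 2) c1).
  have S1_gt0 : 0 < S + 1 by lra.
  have m_gt0 : 0 < m by rewrite !lt_min c1_gt0 !divr_gt0.
  have m_gamma : m * (S + 1) <= gamma by rewrite -ler_pdivlMr // ge_min lexx.
  have m_r : m <= r / 2 by rewrite !ge_min lexx orbT.
  have m_c1 : m <= c1 by rewrite !ge_min lexx !orbT.
  exists (m / 2); split; rewrite ?divr_gt0 //; try lra.
exists c1, c2; split => // x1 x2.
set w := A *m x2 - x1; pose y := r *: map_mx Num.sg w; exists y.
have y_small : l1 y <= eps / 2.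
  rewrite l1Z gtr0_norm //; apply: le_trans (ler_wpM2l (ltW r_gt0) (l1_map_sg w)) _.
  by rewrite /r; lra.
have y_lt : l1 y < eps by lra.
split=> // Rf Rf_small.
rewrite -scalemxAr mxE trmx_mul_map_sg.
have Rf_y : Rf y <= kappa * (eps / 2).
  by apply: le_trans (Rf_small _ y_lt) _; rewrite ler_wpM2l.
have x1_le : l1 x1 <= S * l1 x2 + l1 w.
  by rewrite -[x1](subKr (A *m x2)); apply: le_trans (l1B _ _) _; rewrite lerD2r.
have := N_growth x1 x2; rewrite -/w => growth.
(* The left side is at most -gamma ||x2|| - r/2 ||w||, and by the choice of c2
   the right side is at least that. *)
have := l1_ge0 x2; have := l1_ge0 w; move: c1C; rewrite /gamma /r in c2_gamma c2_r *.
nra.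
Qed.

End ExpandingEstimate.

Theorem lemma3p3 (R : realType) (M : 'M[int]_2) (eps : R) :
  \det M = 1 -> hyperbolic M -> 0 < eps ->
  exists cM : R, 0 < cM /\
    forall kappa : R, 0 <= kappa -> kappa < cM ->
    exists c1 c2 : R, [/\ 0 < c2, c2 < c1 &
      forall n1 n2 : 'cV[int]_2,
      exists y : 'cV[R]_2, l1 y < eps /\
        forall Rf : 'cV[R]_2 -> R,
          (forall z, 0 <= Rf z) ->
          (forall z, l1 z < eps -> Rf z <= kappa * l1 z) ->
          - c1 * (normM M (toR n1) - normM M (toR n2))
            - (((toR n2)^T *m toR M - (toR n1)^T) *m y) 0 0
            + l1 (toR n2) * Rf y
          <= - c2 * (l1 (toR n1) + l1 (toR n2))].
Proof.
move=> detM hypM eps_gt0.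
have tr_gt2 : 2 < `|\tr (toR M : 'M[R]_2)|.
  by rewrite mxtrace_map -intr_norm (ltr_int R 2) hyperbolic_trace.
have [mu [nu [trM mu_nu mu_gt1]]] := quadratic_real_roots tr_gt2.
have [C C_gt0 lipschitz] := normM_lipschitz detM trM mu_nu mu_gt1.
have expand := normM_expand detM trM mu_nu mu_gt1.
exists ((1 - `|nu|) / (4 * C)); split=> [|kappa kappa_ge0 kappa_lt].
  by rewrite divr_gt0 ?mulr_gt0 // subr_gt0 (nu_lt1 mu_nu mu_gt1).
have [c1 [c2 [c2_gt0 c2_lt_c1 estimate]]] :=
  expanding_estimate C_gt0 lipschitz expand eps_gt0 kappa_ge0 kappa_lt.
exists c1, c2; split=> // n1 n2.
have [y [y_lt estimate_y]] := estimate (toR n1) (toR n2).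
exists y; split=> // Rf _ Rf_small.
have -> : (toR n2 : 'cV[R]_2)^T *m toR M - (toR n1)^T = ((toR M)^T *m toR n2 - toR n1)^T.
  by rewrite raddfB /= trmx_mul trmxK.
exact: estimate_y.
Qed.
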